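(* For every $k\ge 1$, the bi-hypergraph obtained from $\mathcal H_{2k}$ by adding two new vertices $u$ and $v$, removing the edge $\{v_{1,1},v_{1,2},v_{1,3}\}$, and adding the edges $\{u,v_{1,1},v_{1,2}\}$, $\{v,v_{1,2},v_{1,3}\}$, and $\{u,v_{1,j},v_{2k,3-j}\}$ and $\{v,v_{1,j+1},v_{2k,4-j}\}$ for all $j\in[2]$, is minimal uncolorable.
   Context: A bi-hypergraph $\mathcal H=(V,E)$ consists of a finite vertex set $V$ and a set $E$ of subsets of $V$, called edges, with no edge contained in another. A mapping $f:V\to\mathbb N$ is a proper coloring of $\mathcal H$ if $1<|f(e)|<|e|$ for every $e\in E$, where $f(e)=\{f(x):x\in e\}$. $\mathcal H$ is colorable if it has a proper coloring, and uncolorable otherwise. A subhypergraph of $\mathcal H$ is a bi-hypergraph $(V',E')$ with $V'\subseteq V$, $E'\subseteq E$; $\mathcal H$ is minimal uncolorable if it is uncolorable but every proper subhypergraph of it is colorable. For $k\ge 2$, $\mathcal H_k$ is the $3$-uniform bi-hypergraph with vertex set $\{v_{i,j}: i\in[k], j\in[3]\}$ (all distinct), with the convention $v_{i,4}=v_{i,1}$, $v_{i,5}=v_{i,2}$, whose edges are the sets $\{v_{i,1},v_{i,2},v_{i,3}\}$ for all $i\in[k]$ and the sets $\{v_{q+1,j},v_{q,j},v_{q,j+t}\}$ for all $q\in[k-1]$, $j\in[3]$, $t\in\{1,2\}$. *)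

From mathcomp Require Import all_boot.
Set Implicit Arguments. Unset Strict Implicit. Unset Printing Implicit Defensive.

Section BiHypergraph.
Variable T : finType.

Definition is_bihypergraph (V : {set T}) (E : {set {set T}}) : Prop :=
  (forall e, e \in E -> e \subset V) /\
  (forall e1 e2, e1 \in E -> e2 \in E -> e1 \subset e2 -> e1 = e2).

Definition ncolors (f : T -> nat) (e : {set T}) : nat :=
  size (undup [seq f x | x <- enum e]).

(** f : V -> N is a proper colouring: 1 < |f(e)| < |e| for every edge e.
    (Colourings are given as functions on all of T; values outside V are
    irrelevant since edges lie inside V.) *)
Definition proper_coloring (E : {set {set T}}) (f : T -> nat) : Prop :=
  forall e, e \in E -> 1 < ncolors f e < #|e|.

Definition colorable (V : {set T}) (E : {set {set T}}) : Prop :=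
  exists f : T -> nat, proper_coloring E f.

Definition minimal_uncolorable (V : {set T}) (E : {set {set T}}) : Prop :=
  ~ colorable V E /\
  (forall (V' : {set T}) (E' : {set {set T}}),
      V' \subset V -> E' \subset E -> is_bihypergraph V' E' ->
      (V', E') <> (V, E) -> colorable V' E').

End BiHypergraph.

(** * The hypergraph H_n (n = m.+1 rows) plus two extra vertices u, v.
    Vertex type: inl false = u, inl true = v, inr (i, j) = v_{i+1, j+1}. *)
Definition Vtx (m : nat) : finType := (bool + ('I_m.+1 * 'I_3))%type.

Definition uu {m} : Vtx m := inl false.
Definition vv {m} : Vtx m := inl true.

(** vx i j = v_{i,j} with 1-based indices i in [m+1], j >= 1, and the
    convention v_{i,j+3} = v_{i,j}. *)
Definition vx {m} (i j : nat) : Vtx m := inr (inord i.-1, inord (j.-1 %% 3)).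

Definition rowEdge {m} (i : nat) : {set Vtx m} := [set vx i 1; vx i 2; vx i 3].

Definition linkEdge {m} (q j t : nat) : {set Vtx m} :=
  [set vx q.+1 j; vx q j; vx q (j + t)].

Definition H_edges (m : nat) : {set {set Vtx m}} :=
  [set rowEdge (val i).+1 | i : 'I_m.+1] :|:
  [set linkEdge (val p.1.1).+1 (val p.1.2).+1 (val p.2).+1 | p : ('I_m * 'I_3 * 'I_2)%type].

(** The modified hypergraph, with n = m.+1 rows (the paper takes n = 2k):
    remove {v_{1,1},v_{1,2},v_{1,3}}, add {u,v_{1,1},v_{1,2}}, {v,v_{1,2},v_{1,3}},
    and {u,v_{1,j},v_{n,3-j}}, {v,v_{1,j+1},v_{n,4-j}} for j in [2]. *)
Definition G_edges (m : nat) : {set {set Vtx m}} :=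
  (H_edges m :\ rowEdge 1) :|:
  [set [set uu; vx 1 1; vx 1 2]; [set vv; vx 1 2; vx 1 3]] :|:
  [set [set uu; vx 1 (val j).+1; vx m.+1 (3 - (val j).+1)] | j : 'I_2] :|:
  [set [set vv; vx 1 (val j).+2; vx m.+1 (4 - (val j).+1)] | j : 'I_2].

Definition G_vertices (m : nat) : {set Vtx m} := [set: Vtx m].

From mathcomp Require Import all_boot zify.
Set Implicit Arguments. Unset Strict Implicit. Unset Printing Implicit Defensive.

(* All edges have three vertices, so a colouring is proper exactly when every edge sees
   two colours.  If rows i and i+1 are both properly coloured, the six link edges between
   them force row i+1 to be row i with its two colours swapped; hence in a proper colouring
   rows 2, 4, ..., 2k are coloured alike, and then the links from row 1 to row 2 leave no
   consistent colours for u and v.  Conversely, deleting any edge allows a colouring whose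
   rows alternate between two fixed patterns before and after the deleted edge; the patterns
   and the colours of u and v come from small tables checked by evaluation. *)

Section RowColorings.
Variable C : eqType.
Local Notation row := (C * C * C)%type.

Definition two_colored (a b c : C) : bool :=
  [|| a == b, b == c | a == c] && ~~ ((a == b) && (b == c)).

Definition cell (x : row) (j : nat) : C :=
  match j.-1 %% 3 with 0 => x.1.1 | 1 => x.1.2 | _ => x.2 end.

Definition proper_row (x : row) : bool := two_colored x.1.1 x.1.2 x.2.

Definition link_ok (x y : row) (jt : nat * nat) : bool :=
  two_colored (cell y jt.1) (cell x jt.1) (cell x (jt.1 + jt.2)).

Definition link_indices : seq (nat * nat) := [:: (1, 1); (1, 2); (2, 1); (2, 2); (3, 1); (3, 2)].

Definition linked (x y : row) : bool := all (link_ok x y) link_indices.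

Definition uv_ok (u v : C) (x y : row) (k : nat) : bool :=
  match k with
  | 0 => two_colored u (cell x 1) (cell x 2)
  | 1 => two_colored v (cell x 2) (cell x 3)
  | 2 => two_colored u (cell x 1) (cell y 2)
  | 3 => two_colored u (cell x 2) (cell y 1)
  | 4 => two_colored v (cell x 2) (cell y 3)
  | _ => two_colored v (cell x 3) (cell y 2)
  end.

Definition uv_linked (u v : C) (x y : row) : bool := all (uv_ok u v x y) (iota 0 6).

Definition linked_except (x y : row) (jt0 : nat * nat) : bool :=
  all (fun jt => (jt == jt0) || link_ok x y jt) link_indices.

Definition uv_linked_except (u v : C) (x y : row) (k0 : nat) : bool :=
  all (fun k => (k == k0) || uv_ok u v x y k) (iota 0 6).

End RowColorings.

Lemma mem_link_indices j t : ((j, t) \in link_indices) = (1 <= j <= 3) && (1 <= t <= 2).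
Proof. by case: j => [|[|[|[|j]]]]; case: t => [|[|[|t]]]. Qed.

(* Splits on every equality between colours in the goal, substituting as it goes, until
   each hypothesis evaluates to a boolean constant. *)
Ltac decide_colors :=
  rewrite /proper_row /linked /link_ok /uv_linked /uv_ok /cell /two_colored /=;
  intros; try (apply: contraT => ?);
  repeat match goal with H : is_true _ |- _ => move: H end;
  repeat (rewrite ?eqxx /=; try by [];
          match goal with
          | H : is_true (?x != ?x) |- _ => by rewrite eqxx in H
          | |- context [?x == ?y] =>
              let e := fresh in case: (eqVneq x y) => e; [first [subst x | subst y] |]
          end).

(* Each cell of [y] is the colour of [x] other than the one above it, and likewise from
   [y] to [z]. *)
Lemma linked_period2 (C : eqType) (x y z : C * C * C) :
  proper_row x -> proper_row y -> proper_row z -> linked x y -> linked y z -> z == x.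
Proof. by case: x y z => [[x1 x2] x3] [[y1 y2] y3] [[z1 z2] z3]; decide_colors. Qed.

Lemma uv_linked_closing (C : eqType) (u v : C) (x y : C * C * C) :
  proper_row y -> linked x y -> ~~ uv_linked u v x y.
Proof. by case: x y => [[x1 x2] x3] [[y1 y2] y3]; decide_colors. Qed.

Lemma linked_rows_period2 (C : eqType) (R : nat -> C * C * C) a n :
  (forall i, a <= i <= n -> proper_row (R i)) ->
  (forall i, a <= i < n -> linked (R i) (R i.+1)) ->
  forall d, a + d.*2 <= n -> R (a + d.*2) = R a.
Proof.
move=> rows_proper rows_linked; elim=> [|d IHd] le_n; first by rewrite addn0.
rewrite -IHd; last by lia.
rewrite doubleS !addnS; apply/eqP/(@linked_period2 _ _ (R (a + d.*2).+1)).
  all: (apply: rows_proper || apply: rows_linked); lia.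
Qed.

Lemma ncolors_set3 (T : finType) (f : T -> nat) (x y z : T) :
  ncolors f [set x; y; z] = size (undup [:: f x; f y; f z]).
Proof.
rewrite /ncolors; apply: perm_size; apply: uniq_perm; rewrite ?undup_uniq // => c.
rewrite !mem_undup; apply/mapP/idP => [[w]|].
  by rewrite mem_enum !inE -!orbA => /or3P [] /eqP -> ->; rewrite eqxx ?orbT.
by rewrite !inE => /or3P [] /eqP ->; [exists x | exists y | exists z];
  rewrite // mem_enum !inE eqxx ?orbT.
Qed.

Lemma two_coloredE (C : eqType) (a b c : C) : two_colored a b c = (size (undup [:: a; b; c]) == 2).
Proof. rewrite /= !inE; decide_colors. Qed.

Lemma card_set3 (T : finType) (x y z : T) :
  [&& x != y, x != z & y != z] -> #|[set x; y; z]| = 3.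
Proof.
move=> /and3P [xy xz yz].
have <- : #|[:: x; y; z]| = 3 by apply/card_uniqP; rewrite /= !inE negb_or xy xz yz.
by apply: eq_card => w; rewrite !inE orbA.
Qed.

Lemma vx_mod3 {m} i j : @vx m i j = vx i (j.-1 %% 3).+1.
Proof. by rewrite /vx /= modn_mod. Qed.

Lemma vx_eq {m} i j i' j' : 0 < i <= m.+1 -> 0 < i' <= m.+1 ->
  (@vx m i j == vx i' j') = (i == i') && (j.-1 %% 3 == j'.-1 %% 3).
Proof.
case: i => [|i] // /andP [_ lt_i]; case: i' => [|i'] // /andP [_ lt_i'].
by rewrite /vx (inj_eq inr_inj) xpair_eqE -!val_eqE /= !inordK ?ltn_pmod.
Qed.

Lemma vx_ord m (i : 'I_m.+1) (j : 'I_3) : @vx m i.+1 j.+1 = inr (i, j).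
Proof. by rewrite /vx /= modn_small // !inord_val. Qed.

Definition row_colors m (f : Vtx m -> nat) (i : nat) : nat * nat * nat :=
  (f (vx i 1), f (vx i 2), f (vx i 3)).

Lemma cell_row_colors m (f : Vtx m -> nat) i j : cell (row_colors f i) j = f (vx i j).
Proof.
rewrite /cell (vx_mod3 i j).
by case: (j.-1 %% 3) (ltn_pmod j.-1 (isT : 0 < 3)) => [|[|[|]]].
Qed.

(* [RowCode i], [LinkCode q j t] and [UVCode k] stand for [rowEdge i], [linkEdge q j t]
   and the k-th edge through u or v, listed in the order of [G_edges]. *)
Inductive edge_code := RowCode of nat | LinkCode of nat & nat & nat | UVCode of nat.

Section EdgeCodes.
Variable m : nat.

Definition code_valid (c : edge_code) : bool :=
  match c with
  | RowCode i => 2 <= i <= m.+1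
  | LinkCode q j t => [&& 1 <= q <= m, 1 <= j <= 3 & 1 <= t <= 2]
  | UVCode k => k < 6
  end.

Definition code_ends (c : edge_code) : Vtx m * Vtx m * Vtx m :=
  match c with
  | RowCode i => (vx i 1, vx i 2, vx i 3)
  | LinkCode q j t => (vx q.+1 j, vx q j, vx q (j + t))
  | UVCode 0 => (uu, vx 1 1, vx 1 2)
  | UVCode 1 => (vv, vx 1 2, vx 1 3)
  | UVCode 2 => (uu, vx 1 1, vx m.+1 2)
  | UVCode 3 => (uu, vx 1 2, vx m.+1 1)
  | UVCode 4 => (vv, vx 1 2, vx m.+1 3)
  | UVCode _ => (vv, vx 1 3, vx m.+1 2)
  end.

Definition code_edge (c : edge_code) : {set Vtx m} :=
  let: (x, y, z) := code_ends c in [set x; y; z].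

Definition code_ok (f : Vtx m -> nat) (c : edge_code) : bool :=
  let: (x, y, z) := code_ends c in two_colored (f x) (f y) (f z).

Definition rows_ok (R : nat -> nat * nat * nat) (u v : nat) (c : edge_code) : bool :=
  match c with
  | RowCode i => proper_row (R i)
  | LinkCode q j t => link_ok (R q) (R q.+1) (j, t)
  | UVCode k => uv_ok u v (R 1) (R m.+1) k
  end.

Lemma code_okE f c : code_ok f c = rows_ok (row_colors f) (f uu) (f vv) c.
Proof.
rewrite /code_ok /rows_ok /proper_row /link_ok /uv_ok.
by case: c => [i|q j t|[|[|[|[|[|[|k]]]]]]] /=; rewrite ?cell_row_colors.
Qed.

Hypothesis m_gt0 : 0 < m.

Lemma code_ends_uniq c : code_valid c ->
  let: (x, y, z) := code_ends c in [&& x != y, x != z & y != z].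
Proof.
have row1 : 0 < 1 <= m.+1 by [].
have rowm : 0 < m.+1 <= m.+1 by rewrite leqnn.
case: c => [i|q j t|k] /=.
- case/andP => i2 im; have row_i : 0 < i <= m.+1 by rewrite im (ltn_trans _ i2).
  by rewrite !vx_eq // eqxx.
- case/and3P => /andP [q1 qm] /andP [j1 j3] /andP [t1 t2].
  have row_q : 0 < q <= m.+1 by rewrite q1 ltnW.
  rewrite !vx_eq // ?ltnS // gtn_eqF // !eqxx /=.
  by case: j j1 j3 => [|[|[|[|]]]] // _ _; case: t t1 t2 => [|[|[|]]].
- have m1 : (1 == m.+1) = false := ltn_eqF (m_gt0 : 1 < m.+1).
  by case: k => [|[|[|[|[|[|k]]]]]] //= _; rewrite ?vx_eq // ?eqxx ?m1.
Qed.

Lemma card_code_edge c : code_valid c -> #|code_edge c| = 3.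
Proof.
move/code_ends_uniq; rewrite /code_edge.
by case: (code_ends c) => [[x y] z]; apply: card_set3.
Qed.

Lemma proper_code_edge f c : code_valid c ->
  (1 < ncolors f (code_edge c) < #|code_edge c|) = code_ok f c.
Proof.
move=> c_valid; rewrite card_code_edge // /code_edge /code_ok.
case: (code_ends c) => [[x y] z]; rewrite ncolors_set3 two_coloredE.
by case: (size _) => [|[|[|]]].
Qed.

Lemma rowEdge_neq1 i : 2 <= i <= m.+1 -> @rowEdge m i != rowEdge 1.
Proof.
case/andP => i2 im; apply/negP => /eqP E.
have : @vx m i 1 \in rowEdge 1 by rewrite -E !inE eqxx.
by rewrite !inE !vx_eq ?im ?(ltn_trans _ i2) // (gtn_eqF i2).
Qed.

Lemma linkEdge_neq1 q j t : 1 <= q <= m -> @linkEdge m q j t != rowEdge 1.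
Proof.
case/andP => q1 qm; apply/negP => /eqP E.
have : @vx m q.+1 j \in rowEdge 1 by rewrite -E !inE eqxx.
by rewrite !inE !vx_eq ?ltnS // eqSS gtn_eqF.
Qed.

Lemma code_edge_in c : code_valid c -> code_edge c \in G_edges m.
Proof.
rewrite /G_edges; case: c => [i|q j t|k] /=.
- move=> vi; do 3 (apply/setUP; left); rewrite in_setD1 rowEdge_neq1 //=.
  apply/setUP; left; apply/imsetP; exists (@Ordinal m.+1 i.-1 ltac:(lia)) => //=.
- case/and3P => vq vj vt; do 3 (apply/setUP; left); rewrite in_setD1 linkEdge_neq1 //=.
  apply/setUP; right; apply/imsetP.
  exists ((@Ordinal m q.-1 ltac:(lia), @Ordinal 3 j.-1 ltac:(lia)), @Ordinal 2 t.-1 ltac:(lia)).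
    by [].
  by rewrite /= !prednK //; lia.
- case: k => [|[|[|[|[|[|k]]]]]] //= _.
  + by do 2 (apply/setUP; left); apply/setUP; right; rewrite !inE eqxx.
  + by do 2 (apply/setUP; left); apply/setUP; right; rewrite !inE eqxx orbT.
  + by apply/setUP; left; apply/setUP; right; apply/imsetP; exists (@Ordinal 2 0 isT).
  + by apply/setUP; left; apply/setUP; right; apply/imsetP; exists (@Ordinal 2 1 isT).
  + by apply/setUP; right; apply/imsetP; exists (@Ordinal 2 0 isT).
  + by apply/setUP; right; apply/imsetP; exists (@Ordinal 2 1 isT).
Qed.

Lemma G_edge_code e : e \in G_edges m -> exists2 c, code_valid c & e = code_edge c.
Proof.
case/setUP => [/setUP [/setUP [/setD1P [ne1 /setUP [] /imsetP [x _ ?]]|]|]|]; subst.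
- exists (RowCode x.+1) => //=; rewrite ltn_ord andbT ltnS lt0n.
  by apply: contraNneq ne1 => /= ->.
- by case: x ne1 => [[q j] t] _; exists (LinkCode q.+1 j.+1 t.+1); rewrite //= !ltn_ord.
- by case/set2P => ->; [exists (UVCode 0) | exists (UVCode 1)].
- by case/imsetP => [[[|[|n]] // ?] _ ->]; [exists (UVCode 2) | exists (UVCode 3)].
- by case/imsetP => [[[|[|n]] // ?] _ ->]; [exists (UVCode 4) | exists (UVCode 5)].
Qed.

Lemma code_edge_cover (x : Vtx m) : exists2 c, code_valid c & x \in code_edge c.
Proof.
case: x => [[]|[i j]].
- by exists (UVCode 1); rewrite //= !inE eqxx.
- by exists (UVCode 0); rewrite //= !inE eqxx.
rewrite -vx_ord; have [i0|i_gt0] := posnP i.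
  exists (LinkCode 1 j.+1 1); first by rewrite /= m_gt0 ltn_ord.
  by rewrite /code_edge /= i0 !inE eqxx orbT.
exists (RowCode i.+1); first by rewrite /= ltnS i_gt0 ltn_ord.
by case: j => [[|[|[|n]] // ?]]; rewrite /code_edge /= !inE eqxx ?orbT.
Qed.

End EdgeCodes.

Lemma G_uncolorable m (f : Vtx m -> nat) :
  0 < m -> odd m -> ~ proper_coloring (G_edges m) f.
Proof.
move=> m_gt0 m_odd f_proper; set R := row_colors f.
have ok c : code_valid m c -> rows_ok m R (f uu) (f vv) c.
  by move=> c_valid; rewrite -code_okE -proper_code_edge // f_proper ?code_edge_in.
have row_ok i : 2 <= i <= m.+1 -> proper_row (R i) by move=> vi; apply: (ok (RowCode i)).
have rows_linked i : 1 <= i <= m -> linked (R i) (R i.+1).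
  move=> vi; apply/allP => -[j t] jt.
  by apply: (ok (LinkCode i j t)); rewrite /= vi -mem_link_indices.
have R_last : R m.+1 = R 2.
  have m_eq : 2 + (m./2).*2 = m.+1 by rewrite -[in RHS](odd_double_half m) m_odd add1n.
  by rewrite -m_eq (linked_rows_period2 row_ok) ?m_eq // => i vi; apply: rows_linked; lia.
apply: (negP (uv_linked_closing (f uu) (f vv) (row_ok 2 m_gt0) (rows_linked 1 m_gt0))).
by rewrite -R_last; apply/allP => k; rewrite mem_iota => vk; apply: (ok (UVCode k)).
Qed.

Local Notation row := (nat * nat * nat)%type.

Definition row_coloring m (R : nat -> row) (u v : nat) (x : Vtx m) : nat :=
  match x with inl b => if b then v else u | inr (i, j) => cell (R i.+1) j.+1 end.

Lemma row_colors_coloring m R u v i :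
  0 < i <= m.+1 -> row_colors (@row_coloring m R u v) i = R i.
Proof.
case: i => [|i] // /andP [_ lt_i]; rewrite /row_colors /row_coloring /vx /= !inordK //.
by case: (R i.+1) => [[]].
Qed.

Lemma code_ok_row_coloring m R u v c :
  code_valid m c -> code_ok (@row_coloring m R u v) c = rows_ok m R u v c.
Proof.
rewrite code_okE /rows_ok; case: c => [i|q j t|k] /=.
- by case/andP => i2 im; rewrite row_colors_coloring //; lia.
- by case/and3P => /andP [q1 qm] _ _; rewrite !row_colors_coloring //; lia.
- by move=> _; rewrite !row_colors_coloring //; lia.
Qed.

Definition alt_row (A : row * row) (b : bool) : row := if b then A.1 else A.2.

Definition alternating_ok (A : row * row) : bool :=
  [&& proper_row A.1, proper_row A.2, linked A.1 A.2 & linked A.2 A.1].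

Lemma alt_row_proper A b : alternating_ok A -> proper_row (alt_row A b).
Proof. by case/and4P; case: b. Qed.

Lemma alt_row_linked A b : alternating_ok A -> linked (alt_row A b) (alt_row A (~~ b)).
Proof. by case/and4P; case: b. Qed.

Definition spliced (q : nat) (A : row * row) (M : row) (B : row * row) (r : nat) : row :=
  if r < q then alt_row A (odd r) else if r == q then M else alt_row B (odd r).

Section Spliced.
Variables (q : nat) (A : row * row) (M : row) (B : row * row).

Lemma spliced_lt r : r < q -> spliced q A M B r = alt_row A (odd r).
Proof. by rewrite /spliced => ->. Qed.

Lemma spliced_eq : spliced q A M B q = M.
Proof. by rewrite /spliced ltnn eqxx. Qed.

Lemma spliced_gt r : q < r -> spliced q A M B r = alt_row B (odd r).
Proof. by move=> lt_qr; rewrite /spliced ltnNge ltnW // gtn_eqF. Qed.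

End Spliced.

Lemma spliced_le q A B r : r <= q -> spliced q A (alt_row A (odd q)) B r = alt_row A (odd r).
Proof. by rewrite leq_eqVlt => /predU1P [->|/spliced_lt //]; rewrite spliced_eq. Qed.

(* Away from row [q] the rows alternate between two rows linked both ways, so only the
   edges at row [q] and those through u and v need checking. *)
Lemma spliced_rows_ok m q A M B u v c0 :
  alternating_ok A -> alternating_ok B ->
  (2 <= q <= m.+1 -> RowCode q <> c0 -> proper_row M) ->
  (2 <= q <= m.+1 -> forall jt, jt \in link_indices -> LinkCode q.-1 jt.1 jt.2 <> c0 ->
     link_ok (alt_row A (~~ odd q)) M jt) ->
  (1 <= q <= m -> forall jt, jt \in link_indices -> LinkCode q jt.1 jt.2 <> c0 ->
     link_ok M (alt_row B (~~ odd q)) jt) ->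
  (forall k, k < 6 -> UVCode k <> c0 -> uv_ok u v (spliced q A M B 1) (spliced q A M B m.+1) k) ->
  forall c, code_valid m c -> c <> c0 -> rows_ok m (spliced q A M B) u v c.
Proof.
move=> A_ok B_ok M_proper M_prev M_next uv_good [i|i j t|k] /=.
- move=> vi ne_i; have [lt_iq|lt_qi|iq] := ltngtP i q.
  + by rewrite spliced_lt ?alt_row_proper.
  + by rewrite spliced_gt ?alt_row_proper.
  + by subst q; rewrite spliced_eq; apply: M_proper.
- case/and3P => vi vj vt ne_i.
  have jt : (j, t) \in link_indices by rewrite mem_link_indices vj.
  have [|lt_qi|iq] := ltngtP i q.
  + rewrite -[i < q]/(i.+1 <= q) leq_eqVlt => /predU1P [iq|lt_iq].
      subst q; rewrite spliced_lt // spliced_eq.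
      by rewrite -[odd i]negbK; apply: (M_prev _ (j, t)); rewrite //= ltnS.
    by rewrite !spliced_lt /= ?(allP (alt_row_linked _ A_ok)) //; lia.
  + by rewrite !spliced_gt /= ?(allP (alt_row_linked _ B_ok)) //; lia.
  + by subst q; rewrite spliced_eq spliced_gt //; apply: (M_next _ (j, t)).
- by move=> vk ne_k; apply: uv_good.
Qed.

Definition row_removal_cert (par : bool) : (row * row) * row * (row * row) * nat * nat :=
  if par then ((0, 0, 1), (1, 1, 0), (0, 0, 0), ((1, 1, 2), (2, 2, 1)), 2, 1)
  else ((0, 0, 1), (1, 1, 0), (1, 1, 1), ((2, 2, 0), (0, 0, 2)), 1, 0).

Lemma row_removal_cert_ok par :
  let: (A, M, B, u, v) := row_removal_cert par in
  [&& alternating_ok A, alternating_ok B, linked (alt_row A (~~ par)) M,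
      linked M (alt_row B (~~ par)) & uv_linked u v A.1 B.2 && (par || uv_linked u v A.1 M)].
Proof. by case: par. Qed.

Lemma row_removal_colorable m q : odd m -> 2 <= q <= m.+1 ->
  exists f : Vtx m -> nat, forall c, code_valid m c -> c <> RowCode q -> code_ok f c.
Proof.
move=> m_odd vq; have := row_removal_cert_ok (odd q).
case: (row_removal_cert (odd q)) => [[[[A M] B] u] v].
case/and5P => A_ok B_ok prev_ok next_ok /andP [uv_good uv_last].
exists (row_coloring (spliced q A M B) u v) => c vc ne_c; rewrite code_ok_row_coloring //.
apply: (spliced_rows_ok A_ok B_ok _ _ _ _ vc ne_c).
- by move=> _ /(_ erefl).
- by move=> _ jt /(allP prev_ok).
- by move=> _ jt /(allP next_ok).
move=> k vk _; rewrite spliced_lt; last by case/andP: vq.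
have k_in : k \in iota 0 6 by rewrite mem_iota.
have [qm|ne_qm] := eqVneq q m.+1.
  by subst q; rewrite spliced_eq; move: uv_last; rewrite /= m_odd => /allP ->.
rewrite spliced_gt /= ?m_odd ?(allP uv_good) //; lia.
Qed.

Definition link_removal_cert (par : bool) (jt : nat * nat) :
    (row * row) * (row * row) * nat * nat :=
  match jt with
  | (1, 1) => ((0, 0, 1), (1, 1, 0), ((1, 0, 0), (0, 1, 1)), 1, 0)
  | (1, _) => ((0, 1, 0), (1, 0, 1), ((1, 0, 0), (0, 1, 1)), 0, 0)
  | (2, 1) => if par then ((0, 1, 1), (1, 0, 0), ((0, 0, 1), (1, 1, 0)), 0, 0)
              else ((0, 0, 1), (1, 1, 0), ((0, 2, 0), (2, 0, 2)), 2, 0)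
  | (2, _) => ((0, 0, 1), (1, 1, 0), ((0, 1, 0), (1, 0, 1)), 1, 0)
  | (3, 1) => ((0, 1, 0), (1, 0, 1), ((0, 0, 1), (1, 1, 0)), 0, 0)
  | _ => if par then ((0, 1, 0), (1, 0, 1), ((2, 2, 1), (1, 1, 2)), 0, 1)
         else ((0, 1, 1), (1, 0, 0), ((1, 1, 0), (0, 0, 1)), 1, 0)
  end.

Lemma link_removal_cert_ok par : all (fun jt =>
  let: (A, B, u, v) := link_removal_cert par jt in
  [&& alternating_ok A, alternating_ok B,
      linked_except (alt_row A par) (alt_row B (~~ par)) jt & uv_linked u v A.1 B.2])
  link_indices.
Proof. by case: par. Qed.

Lemma link_removal_colorable m q j t : odd m -> 1 <= q <= m -> (j, t) \in link_indices ->
  exists f : Vtx m -> nat, forall c, code_valid m c -> c <> LinkCode q j t -> code_ok f c.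
Proof.
move=> m_odd vq jt_in; have := allP (link_removal_cert_ok (odd q)) _ jt_in.
case: (link_removal_cert (odd q) (j, t)) => [[[A B] u] v] /and4P [A_ok B_ok next_ok uv_good].
exists (row_coloring (spliced q A (alt_row A (odd q)) B) u v) => c vc ne_c.
rewrite code_ok_row_coloring //.
apply: (spliced_rows_ok A_ok B_ok _ _ _ _ vc ne_c).
- by move=> _ _; rewrite alt_row_proper.
- by move=> _ jt jt' _; rewrite -{2}[odd q]negbK (allP (alt_row_linked _ A_ok)).
- move=> _ jt jt' ne_jt; move/allP/(_ jt jt'): next_ok; case: eqP => // jt_eq.
  by case: ne_jt; rewrite jt_eq.
move=> k vk _; rewrite spliced_le ?spliced_gt /= ?m_odd ?(allP uv_good) ?mem_iota //; lia.
Qed.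

Definition uv_removal_cert (k : nat) : (row * row) * nat * nat :=
  match k with
  | 0 => ((0, 1, 1), (1, 0, 0), 2, 0)
  | 1 => ((0, 0, 1), (1, 1, 0), 1, 2)
  | 2 => ((0, 1, 1), (1, 0, 0), 0, 0)
  | 3 => ((0, 1, 1), (1, 0, 0), 1, 0)
  | 4 => ((0, 0, 1), (1, 1, 0), 1, 0)
  | _ => ((0, 0, 1), (1, 1, 0), 1, 1)
  end.

Lemma uv_removal_cert_ok : all (fun k =>
  let: (A, u, v) := uv_removal_cert k in alternating_ok A && uv_linked_except u v A.1 A.2 k)
  (iota 0 6).
Proof. by []. Qed.

Lemma uv_removal_colorable m k : odd m -> k < 6 ->
  exists f : Vtx m -> nat, forall c, code_valid m c -> c <> UVCode k -> code_ok f c.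
Proof.
move=> m_odd vk; have := allP uv_removal_cert_ok k; rewrite mem_iota => /(_ vk).
case: (uv_removal_cert k) => [[A u] v] /andP [A_ok uv_good].
exists (row_coloring (spliced m.+2 A A.1 A) u v) => c vc ne_c.
rewrite code_ok_row_coloring //.
apply: (spliced_rows_ok A_ok A_ok _ _ _ _ vc ne_c).
- by rewrite ltnn andbF.
- by rewrite ltnn andbF.
- by move=> /andP [_ /ltnW]; rewrite ltnn.
move=> k' vk' ne_k; rewrite !spliced_lt //= m_odd.
move/allP/(_ k'): uv_good; rewrite mem_iota => /(_ vk').
by case: eqP => // k_eq; case: ne_k; rewrite k_eq.
Qed.

Lemma colorable_without_code m c0 : odd m -> code_valid m c0 ->
  exists f : Vtx m -> nat, forall c, code_valid m c -> c <> c0 -> code_ok f c.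
Proof.
move=> m_odd; case: c0 => [q|q j t|k] /=.
- exact: row_removal_colorable.
- by case/and3P => vq vj vt; apply: link_removal_colorable; rewrite ?mem_link_indices ?vj.
- exact: uv_removal_colorable.
Qed.

Section MainGraph.
Variable m : nat.
Hypothesis m_gt0 : 0 < m.

Lemma G_bihypergraph : is_bihypergraph (G_vertices m) (G_edges m).
Proof.
split=> [e _|e1 e2 /G_edge_code [c1 vc1 ->] /G_edge_code [c2 vc2 ->] sub12]; first exact: subsetT.
by apply/eqP; rewrite eqEcard sub12 !card_code_edge.
Qed.

Lemma G_edges_cover (V : {set Vtx m}) :
  (forall e, e \in G_edges m -> e \subset V) -> V = G_vertices m.
Proof.
move=> sub_V; apply/eqP; rewrite eqEsubset subsetT; apply/subsetP => x _.
have [c vc x_in] := code_edge_cover m_gt0 x.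
exact: subsetP (sub_V _ (code_edge_in m_gt0 vc)) _ x_in.
Qed.

Lemma proper_coloring_without (E : {set {set Vtx m}}) c0 (f : Vtx m -> nat) :
  E \subset G_edges m -> code_edge m c0 \notin E ->
  (forall c, code_valid m c -> c <> c0 -> code_ok f c) -> proper_coloring E f.
Proof.
move=> sub_E c0_notin f_ok e e_in.
have [c vc e_eq] := G_edge_code (subsetP sub_E _ e_in).
rewrite e_eq proper_code_edge // f_ok // => c_eq.
by move: c0_notin; rewrite -c_eq -e_eq e_in.
Qed.

End MainGraph.

Theorem mainTheorem19 (k : nat) (hk : 1 <= k) :
  is_bihypergraph (G_vertices (2 * k).-1) (G_edges (2 * k).-1) /\
  minimal_uncolorable (G_vertices (2 * k).-1) (G_edges (2 * k).-1).
Proof.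
have m_gt0 : 0 < (2 * k).-1 by lia.
have m_odd : odd (2 * k).-1 by rewrite -subn1 oddB ?odd_mul //=; lia.
move: (2 * k).-1 m_gt0 m_odd => m m_gt0 m_odd.
split; first exact: G_bihypergraph.
split=> [[f]|V E _ sub_E [sub_V _] ne_G]; first exact: G_uncolorable.
have [sub_GE|/subsetPn [e e_G e_notin]] := boolP (G_edges m \subset E).
  have E_eq : E = G_edges m by apply/eqP; rewrite eqEsubset sub_E.
  by case: ne_G; rewrite E_eq (G_edges_cover m_gt0 (V := V)) // -E_eq.
have [c0 vc0 e_eq] := G_edge_code e_G.
have [f f_ok] := colorable_without_code m_odd vc0.
by exists f; apply: (proper_coloring_without m_gt0 sub_E _ f_ok); rewrite -e_eq.
Qed.
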